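(* Let $f:\mathbb{R}^n\to\mathbb{R}$ be bounded below by $f_{\mathrm{low}}$ and twice continuously differentiable with $\nabla^2 f$ Lipschitz continuous with constant $L_{\nabla^2 f}$. Run the algorithm described in the context, and suppose that (i) at every iteration $k$ the model $m_k$ is fully quadratic in $B(x_k,\Delta_k)$ with constants $\kappa_{\mathrm{mf}},\kappa_{\mathrm{mg}},\kappa_{\mathrm{mh}}>0$ independent of $k$, and $\|H_k\|\le\kappa_H-1$ for some $\kappa_H\ge1$ independent of $k$; (ii) at every iteration the step satisfies $\|s_k\|\le\Delta_k$ and $$m_k(x_k)-m_k(x_k+s_k)\ge\kappa_s\max\left(\|g_k\|\min\left(\Delta_k,\frac{\|g_k\|}{\|H_k\|+1}\right),\ \tau^m_k\Delta_k^2\right)$$ for some $\kappa_s\in(0,\tfrac12)$. Let $\epsilon>0$. If $\sigma_k\ge\epsilon$ for all $k=0,\ldots,K-1$, then $$K\le\frac{\log(\Delta_0/\Delta_{\min}(\epsilon))}{\log(\gamma_{\mathrm{dec}}^{-1})}+\left(1+\frac{\log(\gamma_{\mathrm{inc}})}{\log(\gamma_{\mathrm{dec}}^{-1})}\right)\frac{(1+\kappa_\sigma\mu_c^{-1})[f(x_0)-f_{\mathrm{low}}]}{\eta_U\kappa_s\min(\epsilon\Delta_{\min}(\epsilon),\epsilon\Delta_{\min}(\epsilon)^2)},$$ where $\kappa_\sigma:=\max(\kappa_{\mathrm{mg}}\Delta_{\max},\kappa_{\mathrm{mh}})$ and $$\Delta_{\min}(\epsilon):=\min\left(\Delta_0,\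 \frac{\gamma_{\mathrm{dec}}\epsilon}{\max\left(\frac{2\kappa_{\mathrm{mf}}\Delta_{\max}}{\kappa_s(1-\eta_S)},\kappa_H,\mu_c\right)+\kappa_\sigma},\ \frac{\gamma_{\mathrm{dec}}\epsilon}{\max\left(\frac{2\kappa_{\mathrm{mf}}}{\kappa_s(1-\eta_S)},\mu_c\right)+\kappa_\sigma},\ \frac{\epsilon}{(1+\kappa_\sigma\mu_c^{-1})\kappa_H}\right).$$
   Context: Norms are Euclidean (operator 2-norm for matrices); $B(x,\Delta)=\{y:\|y-x\|\le\Delta\}$. A model $m$ is fully quadratic in $B(x,\Delta)$ with constants $\kappa_{\mathrm{mf}},\kappa_{\mathrm{mg}},\kappa_{\mathrm{mh}}>0$ if for all $y\in B(x,\Delta)$: $|m(y)-f(y)|\le\kappa_{\mathrm{mf}}\Delta^3$, $\|\nabla m(y)-\nabla f(y)\|\le\kappa_{\mathrm{mg}}\Delta^2$, $\|\nabla^2 m(y)-\nabla^2 f(y)\|\le\kappa_{\mathrm{mh}}\Delta$. Notation: $\tau_k:=\max(-\lambda_{\min}(\nabla^2 f(x_k)),0)$, $\sigma_k:=\max(\|\nabla f(x_k)\|,\tau_k)$, $\tau^m_k:=\max(-\lambda_{\min}(H_k),0)$, $\sigma^m_k:=\max(\|g_k\|,\tau^m_k)$. Algorithm: inputs $x_0\in\mathbb{R}^n$, $\Delta_0>0$, parameters $\Delta_{\max}\ge\Delta_0$, $0<\gamma_{\mathrm{dec}}<1<\gamma_{\mathrm{inc}}$, $0<\eta_U\le\eta_S<1$,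 $\mu_c>0$. For $k=0,1,\ldots$: build a quadratic model $m_k(y)=c_k+g_k^T(y-x_k)+\tfrac12(y-x_k)^TH_k(y-x_k)$ ($H_k$ symmetric); compute a step $s_k$; evaluate $f(x_k+s_k)$ and $\rho_k=\frac{f(x_k)-f(x_k+s_k)}{m_k(x_k)-m_k(x_k+s_k)}$. If $\rho_k\ge\eta_S$ and $\sigma^m_k\ge\mu_c\Delta_k$: $x_{k+1}=x_k+s_k$, $\Delta_{k+1}=\min(\gamma_{\mathrm{inc}}\Delta_k,\Delta_{\max})$. Else if $\eta_U\le\rho_k<\eta_S$ and $\sigma^m_k\ge\mu_c\Delta_k$: $x_{k+1}=x_k+s_k$, $\Delta_{k+1}=\Delta_k$. Otherwise: $x_{k+1}=x_k$, $\Delta_{k+1}=\gamma_{\mathrm{dec}}\Delta_k$. *)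

From HB Require Import structures.
From mathcomp Require Import all_boot all_order all_algebra.
From mathcomp Require Import all_classical all_reals all_analysis.
Set Implicit Arguments. Unset Strict Implicit. Unset Printing Implicit Defensive.
Import Order.TTheory GRing.Theory Num.Theory.
Import numFieldNormedType.Exports.
Local Open Scope classical_set_scope.
Local Open Scope ring_scope.

Section Defs.
Variables (R : realType) (n : nat).

Definition enorm (v : 'cV[R]_n) : R := Num.sqrt (\sum_(i < n) (v i 0) ^+ 2).

Definition opnorm (A : 'M[R]_n) : R :=
  sup [set r : R | exists v : 'cV[R]_n, enorm v <= 1 /\ r = enorm (A *m v)].

Definition lambda_min (A : 'M[R]_n) : R := inf [set a : R | eigenvalue A a].

Definition ecoord (i : 'I_n) : 'cV[R]_n := delta_mx i 0.

Definition grad (f : 'cV[R]_n -> R) (x : 'cV[R]_n) : 'cV[R]_n :=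
  \col_i ('D_(ecoord i) f x).

Definition hess (f : 'cV[R]_n -> R) (x : 'cV[R]_n) : 'M[R]_n :=
  \matrix_(i, j) ('D_(ecoord j) (fun y => 'D_(ecoord i) f y) x).

Definition C2 (f : 'cV[R]_n -> R) : Prop :=
  (forall x, differentiable f x) /\
  (forall i x, differentiable (fun y => 'D_(ecoord i) f y) x) /\
  (forall i j, continuous (fun y => 'D_(ecoord j) (fun z => 'D_(ecoord i) f z) y)).

Definition hess_lipschitz (f : 'cV[R]_n -> R) (L : R) : Prop :=
  forall x y, opnorm (hess f x - hess f y) <= L * enorm (x - y).

Definition qmodel (c : R) (g : 'cV[R]_n) (H : 'M[R]_n) (x y : 'cV[R]_n) : R :=
  c + (g^T *m (y - x)) 0 0 + 2^-1 * (((y - x)^T *m H *m (y - x)) 0 0).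

Definition qmodel_grad (g : 'cV[R]_n) (H : 'M[R]_n) (x y : 'cV[R]_n) : 'cV[R]_n :=
  g + H *m (y - x).

Definition fully_quadratic (f : 'cV[R]_n -> R) (c : R) (g : 'cV[R]_n) (H : 'M[R]_n)
  (x : 'cV[R]_n) (Delta kmf kmg kmh : R) : Prop :=
  forall y, enorm (y - x) <= Delta ->
    `|qmodel c g H x y - f y| <= kmf * Delta ^+ 3 /\
    enorm (qmodel_grad g H x y - grad f y) <= kmg * Delta ^+ 2 /\
    opnorm (H - hess f y) <= kmh * Delta.

Definition tau_of (A : 'M[R]_n) : R := Num.max (- lambda_min A) 0.

Definition sigma_of (g : 'cV[R]_n) (A : 'M[R]_n) : R := Num.max (enorm g) (tau_of A).

End Defs.

Definition kappa_sigma (R : realType) (kmg Dmax kmh : R) : R := Num.max (kmg * Dmax) kmh.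

Definition Delta_min (R : realType) (eps D0 Dmax gdec etaS mu_c kmf kmg kmh ks kH : R) : R :=
  let ksig := kappa_sigma kmg Dmax kmh in
  Num.min (Num.min D0
    (gdec * eps / (Num.max (Num.max (2 * kmf * Dmax / (ks * (1 - etaS))) kH) mu_c + ksig)))
   (Num.min
    (gdec * eps / (Num.max (2 * kmf / (ks * (1 - etaS))) mu_c + ksig))
    (eps / ((1 + ksig * mu_c^-1) * kH))).

From HB Require Import structures.
From mathcomp Require Import all_boot all_order all_algebra.
From mathcomp Require Import all_classical all_reals all_analysis.
From mathcomp Require Import ring lra.
Import Order.TTheory GRing.Theory Num.Theory.
Import numFieldNormedType.Exports.
Set Implicit Arguments. Unset Strict Implicit. Unset Printing Implicit Defensive.
Local Open Scope ring_scope.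

(* While Delta_k is small compared with eps, the fully quadratic model is so accurate
   that the iteration is very successful and the radius grows; hence Delta_k never
   drops below Delta_min(eps).  Comparing sigma_k with its model counterpart needs
   tau(B) <= tau(H) + |H - B| for symmetric H, which follows from the Rayleigh-quotient
   characterisation of the smallest eigenvalue.  Once Delta_k >= Delta_min(eps), the
   sufficient decrease condition makes every successful iteration decrease f by a fixed
   delta > 0.  An unsuccessful iteration lowers ln Delta by ln gdec^-1, a successful one
   raises it by at most ln ginc and lowers f by delta; as ln Delta_k >= ln Delta_min(eps)
   and f >= f_low, this bounds K. *)

Lemma quadratic_ge0_discr (R : realFieldType) (a b c : R) : 0 <= c ->
  (forall t, 0 <= a + 2 * t * b + t ^+ 2 * c) -> b ^+ 2 <= a * c.
Proof.
move=> c_ge0 q_ge0.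
have a_ge0 : 0 <= a by have := q_ge0 0; rewrite !(mul0r, mulr0, expr0n, addr0).
have [c0 | c_gt0] := eqVneq c 0; last first.
  have := q_ge0 (- b / c).
  have -> : a + 2 * (- b / c) * b + (- b / c) ^+ 2 * c = a - b ^+ 2 / c by field.
  by rewrite subr_ge0 ler_pdivrMr // lt_def c_gt0.
rewrite c0 mulr0; have [-> | b_neq0] := eqVneq b 0; first by rewrite expr0n.
have := q_ge0 (- (a + 1) / (2 * b)); rewrite c0 mulr0 addr0.
have -> : 2 * (- (a + 1) / (2 * b)) * b = - (a + 1) by field.
lra.
Qed.

Section EuclideanSpace.
Variables (R : realType) (n : nat).
Local Open Scope classical_set_scope.
Implicit Types (u v w : 'cV[R]_n) (A B M : 'M[R]_n).

Definition dot u v : R := \sum_(i < n) u i 0 * v i 0.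

Lemma dotC u v : dot u v = dot v u.
Proof. by apply: eq_bigr => i _; rewrite mulrC. Qed.

Lemma dotDl u v w : dot (u + v) w = dot u w + dot v w.
Proof. by rewrite /dot -big_split; apply: eq_bigr => i _; rewrite mxE mulrDl. Qed.

Lemma dotDr u v w : dot w (u + v) = dot w u + dot w v.
Proof. by rewrite dotC dotDl !(dotC w). Qed.

Lemma dotZl a u v : dot (a *: u) v = a * dot u v.
Proof. by rewrite /dot mulr_sumr; apply: eq_bigr => i _; rewrite mxE mulrA. Qed.

Lemma dotZr a u v : dot v (a *: u) = a * dot v u.
Proof. by rewrite dotC dotZl dotC. Qed.

Lemma dotNr u v : dot v (- u) = - dot v u.
Proof. by rewrite -scaleN1r dotZr mulN1r. Qed.

Lemma dotBr u v w : dot w (u - v) = dot w u - dot w v.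
Proof. by rewrite dotDr dotNr. Qed.

Lemma dot0l v : dot 0 v = 0.
Proof. by rewrite /dot big1 // => i _; rewrite mxE mul0r. Qed.

Lemma dotvv_ge0 u : 0 <= dot u u.
Proof. by apply: sumr_ge0 => i _; rewrite -expr2 sqr_ge0. Qed.

Lemma dotvv_eq0 u : (dot u u == 0) = (u == 0).
Proof.
apply/idP/eqP => [|->]; last by rewrite dot0l.
rewrite psumr_eq0 => [/allP u0|i _]; last by rewrite -expr2 sqr_ge0.
apply/matrixP => i j; rewrite (ord1 j) mxE.
by apply/eqP; rewrite -sqrf_eq0 expr2; apply: (implyP (u0 i (mem_index_enum i))).
Qed.

Lemma dotvv_gt0 u : (0 < dot u u) = (u != 0).
Proof. by rewrite lt_def dotvv_eq0 dotvv_ge0 andbT. Qed.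

Lemma dotE u v : dot u v = (u^T *m v) 0 0.
Proof. by rewrite mxE; apply: eq_bigr => i _; rewrite mxE. Qed.

Lemma dot_mulmx A u v : dot u (A *m v) = dot (A^T *m u) v.
Proof. by rewrite !dotE trmx_mul trmxK mulmxA. Qed.

Lemma dot_mulmx_sym M u v : M^T = M -> dot u (M *m v) = dot v (M *m u).
Proof. by move=> M_sym; rewrite dot_mulmx M_sym dotC. Qed.

Definition psdmx M : Prop := forall u, 0 <= dot u (M *m u).

Lemma psd_cauchy_schwarz M u v : M^T = M -> psdmx M ->
  dot u (M *m v) ^+ 2 <= dot u (M *m u) * dot v (M *m v).
Proof.
move=> M_sym M_psd; apply: quadratic_ge0_discr => [|t]; first exact: M_psd.
have := M_psd (u + t *: v); rewrite mulmxDr -scalemxAr.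
rewrite !(dotDl, dotDr, dotZl, dotZr) (dot_mulmx_sym v u M_sym).
by congr (_ <= _); ring.
Qed.

Lemma cauchy_schwarz u v : dot u v ^+ 2 <= dot u u * dot v v.
Proof.
have := @psd_cauchy_schwarz 1%:M u v (trmx1 _ _).
by rewrite !mul1mx; apply => w; rewrite mul1mx dotvv_ge0.
Qed.

Lemma enormE u : enorm u = Num.sqrt (dot u u).
Proof. by congr Num.sqrt; apply: eq_bigr => i _; rewrite expr2. Qed.

Lemma enorm_sqr u : enorm u ^+ 2 = dot u u.
Proof. by rewrite enormE sqr_sqrtr ?dotvv_ge0. Qed.

Lemma enorm_ge0 u : 0 <= enorm u.
Proof. exact: sqrtr_ge0. Qed.

Lemma enorm_gt0 u : (0 < enorm u) = (u != 0).
Proof. by rewrite enormE sqrtr_gt0 dotvv_gt0. Qed.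

Lemma enorm0 : enorm (0 : 'cV[R]_n) = 0.
Proof. by rewrite /enorm big1 ?sqrtr0 // => i _; rewrite mxE expr0n. Qed.

Lemma enormZ a u : enorm (a *: u) = `|a| * enorm u.
Proof.
by rewrite !enormE dotZl dotZr mulrA -expr2 sqrtrM ?sqr_ge0 // sqrtr_sqr.
Qed.

Lemma enormN u : enorm (- u) = enorm u.
Proof. by rewrite -scaleN1r enormZ normrN1 mul1r. Qed.

Lemma normr_dot_le u v : `|dot u v| <= enorm u * enorm v.
Proof.
rewrite -(ler_pXn2r (_ : (0 < 2)%N)) ?nnegrE ?mulr_ge0 ?enorm_ge0 //.
by rewrite real_normK ?num_real // exprMn !enorm_sqr cauchy_schwarz.
Qed.

Lemma enormD u v : enorm (u + v) <= enorm u + enorm v.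
Proof.
rewrite -(ler_pXn2r (_ : (0 < 2)%N)) ?nnegrE ?addr_ge0 ?enorm_ge0 //.
rewrite sqrrD !enorm_sqr dotDl !dotDr (dotC v u) -mulr_natr.
have := ler_norm (dot u v); have := normr_dot_le u v; lra.
Qed.

Lemma opnorm_ub A v : enorm v <= 1 -> enorm (A *m v) <= opnorm A.
Proof.
move=> v_le1; apply: ub_le_sup; last by exists v.
pose rowsq := \sum_(i < n) dot (row i A)^T (row i A)^T.
exists (Num.sqrt rowsq) => _ [w [w_le1 ->]].
rewrite enormE ler_sqrt; last by apply: sumr_ge0 => i _; exact: dotvv_ge0.
have rowE i : (A *m w) i 0 = dot (row i A)^T w.
  by rewrite mxE; apply: eq_bigr => j _; rewrite !mxE.
have w_sq_le1 : dot w w <= 1 by rewrite -enorm_sqr; have := enorm_ge0 w; nra.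
apply: le_trans (_ : rowsq * dot w w <= _); last first.
  by rewrite ler_piMr // sumr_ge0 // => i _; exact: dotvv_ge0.
rewrite [dot _ _]/dot mulr_suml; apply: ler_sum => i _.
by rewrite rowE -expr2 cauchy_schwarz.
Qed.

Lemma opnorm_ge0 A : 0 <= opnorm A.
Proof. by have := @opnorm_ub A 0; rewrite mulmx0 enorm0; apply. Qed.

Lemma enorm_mulmx_le A v : enorm (A *m v) <= opnorm A * enorm v.
Proof.
have [-> | v_neq0] := eqVneq v 0; first by rewrite mulmx0 enorm0 mulr0.
have v_gt0 : 0 < enorm v by rewrite enorm_gt0.
have normalized : enorm ((enorm v)^-1 *: v) <= 1.
  by rewrite enormZ ger0_norm ?invr_ge0 ?enorm_ge0 // mulVf ?gt_eqF.
have := opnorm_ub A normalized.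
by rewrite -scalemxAr enormZ ger0_norm ?invr_ge0 ?enorm_ge0 // mulrC ler_pdivrMr.
Qed.

Lemma normr_quadform_le A u : `|dot u (A *m u)| <= opnorm A * dot u u.
Proof.
apply: le_trans (normr_dot_le _ _) _.
rewrite -enorm_sqr expr2 mulrCA ler_wpM2l ?enorm_ge0 //.
exact: enorm_mulmx_le.
Qed.

Lemma psd_enorm_mulmx_sqr M u : M^T = M -> psdmx M ->
  dot (M *m u) (M *m u) <= opnorm M * dot u (M *m u).
Proof.
(* Cauchy-Schwarz for the form of M at u and M u: |M u|^4 <= (u.Mu) (Mu.M Mu). *)
move=> M_sym M_psd.
have cs := psd_cauchy_schwarz u (M *m u) M_sym M_psd; rewrite dot_mulmx M_sym in cs.
have := normr_quadform_le M (M *m u); rewrite ler_norml => /andP[_ MMu_le].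
have uMu_ge0 := M_psd u; have op_ge0 := opnorm_ge0 M.
have [N0 | N_neq0] := eqVneq (dot (M *m u) (M *m u)) 0; first by rewrite N0 mulr_ge0.
have N_gt0 : 0 < dot (M *m u) (M *m u) by rewrite lt_def N_neq0 dotvv_ge0.
nra.
Qed.

Lemma psd_unit_coercive M : M^T = M -> psdmx M -> M \in unitmx ->
  exists2 e, 0 < e & forall u, e * dot u u <= dot u (M *m u).
Proof.
move=> M_sym M_psd M_unit.
pose D := opnorm (invmx M) ^+ 2 * opnorm M.
have D_ge0 : 0 <= D by rewrite mulr_ge0 ?sqr_ge0 ?opnorm_ge0.
exists (D + 1)^-1 => [|u]; first by rewrite invr_gt0; lra.
rewrite mulrC ler_pdivrMr; last by lra.
have inv_le : enorm u <= opnorm (invmx M) * enorm (M *m u).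
  by rewrite -{1}(mulKmx M_unit u) enorm_mulmx_le.
have uu_le : dot u u <= D * dot u (M *m u).
  move: inv_le.
  rewrite -(ler_pXn2r (_ : (0 < 2)%N)) ?nnegrE ?mulr_ge0 ?opnorm_ge0 ?enorm_ge0 //.
  rewrite exprMn !enorm_sqr => /le_trans; apply.
  by rewrite /D -mulrA ler_wpM2l ?sqr_ge0 ?psd_enorm_mulmx_sqr.
have := M_psd u; nra.
Qed.

(* The infimum mu of the Rayleigh quotient is an eigenvalue: otherwise M - mu is
   positive semidefinite and invertible, hence coercive, and mu is not the infimum. *)
Lemma eigenvalue_le_rayleigh M u : M^T = M -> u != 0 ->
  exists2 a, eigenvalue M a & a * dot u u <= dot u (M *m u).
Proof.
move=> M_sym u_neq0.
pose S := [set r : R | exists2 v : 'cV[R]_n, v != 0 & r = dot v (M *m v) / dot v v].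
have S_lb : has_lbound S.
  exists (- opnorm M) => _ [v v_neq0 ->].
  rewrite ler_pdivlMr ?dotvv_gt0 // mulNr.
  by have := normr_quadform_le M v; rewrite ler_norml => /andP[].
pose mu := inf S.
have mu_le v : mu * dot v v <= dot v (M *m v).
  have [-> | v_neq0] := eqVneq v 0; first by rewrite mulmx0 dot0l mulr0.
  by rewrite -ler_pdivlMr ?dotvv_gt0 //; apply: ge_inf S_lb _ _; exists v.
exists mu => //; apply: contraT => not_eig.
pose N := M - mu%:M.
have N_sym : N^T = N by rewrite /N linearB /= tr_scalar_mx M_sym.
have N_quad v : dot v (N *m v) = dot v (M *m v) - mu * dot v v.
  by rewrite mulmxBl mul_scalar_mx dotBr dotZr.
have N_psd : psdmx N by move=> v; rewrite N_quad subr_ge0 mu_le.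
have N_unit : N \in unitmx.
  by move: not_eig; rewrite /eigenvalue /eigenspace negbK kermx_eq0 row_free_unit.
have [e e_gt0 N_coercive] := psd_unit_coercive N_sym N_psd N_unit.
suff : mu + e <= mu by lra.
apply: lb_le_inf; first by exists (dot u (M *m u) / dot u u), u.
move=> _ [v v_neq0 ->]; rewrite ler_pdivlMr ?dotvv_gt0 // mulrDl.
by have := N_coercive v; rewrite N_quad; lra.
Qed.

Lemma eigenvalue_rayleigh A a : eigenvalue A a ->
  exists2 u, u != 0 & dot u (A *m u) = a * dot u u.
Proof.
(* [eigenvalue] is phrased with row eigenvectors w *m A = a *: w. *)
move=> /eigenvalueP [w w_eig w_neq0]; exists w^T; first by rewrite trmx_eq0.
by rewrite !dotE trmxK mulmxA w_eig -scalemxAl mxE.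
Qed.

Lemma lambda_min_le A a : eigenvalue A a -> lambda_min A <= a.
Proof.
move=> A_a; apply: ge_inf => //.
exists (- opnorm A) => b /eigenvalue_rayleigh [u u_neq0 u_b].
have := normr_quadform_le A u.
rewrite u_b normrM (ger0_norm (dotvv_ge0 u)) ler_pM2r ?dotvv_gt0 //.
by rewrite ler_norml => /andP[].
Qed.

Lemma lambda_min_le_perturbed M B b : M^T = M -> eigenvalue B b ->
  lambda_min M <= b + opnorm (M - B).
Proof.
move=> M_sym /eigenvalue_rayleigh [u u_neq0 u_b].
have [a M_a a_le] := eigenvalue_le_rayleigh M_sym u_neq0.
have uu_gt0 : 0 < dot u u by rewrite dotvv_gt0.
have : dot u ((M - B) *m u) <= opnorm (M - B) * dot u u.
  by have := normr_quadform_le (M - B) u; rewrite ler_norml => /andP[].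
rewrite mulmxBl dotBr u_b => pert.
rewrite -(ler_pM2r uu_gt0) mulrDl.
have := ler_wpM2r (ltW uu_gt0) (lambda_min_le M_a); lra.
Qed.

Lemma tau_of_ge0 A : 0 <= tau_of A.
Proof. by rewrite le_max lexx orbT. Qed.

Lemma tau_of_ge A : - lambda_min A <= tau_of A.
Proof. by rewrite le_max lexx. Qed.

Lemma tau_of_le M B : M^T = M -> tau_of B <= tau_of M + opnorm (M - B).
Proof.
move=> M_sym; have op_ge0 := opnorm_ge0 (M - B).
have tauM_ge := tau_of_ge M; have tauM_ge0 := tau_of_ge0 M.
rewrite {1}/tau_of ge_max; apply/andP; split; last by lra.
have [[b B_b] | no_eig] := pselect (exists b, eigenvalue B b).
  suff : lambda_min M - opnorm (M - B) <= lambda_min B by lra.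
  apply: lb_le_inf; first by exists b.
  by move=> b' /= B_b'; have := lambda_min_le_perturbed M_sym B_b'; lra.
(* Without real eigenvalues, [lambda_min B] is [inf set0 = 0]. *)
rewrite /lambda_min (_ : [set a | eigenvalue B a] = set0) ?inf0; first by lra.
by apply/seteqP; split => a //= B_a; apply: no_eig; exists a.
Qed.

Lemma sigma_of_le g M g' B d : M^T = M ->
  enorm (g - g') <= d -> opnorm (M - B) <= d -> sigma_of g' B <= sigma_of g M + d.
Proof.
move=> M_sym g_near M_near.
have g'_le : enorm g' <= enorm g + enorm (g - g').
  by have := enormD g (- (g - g')); rewrite enormN opprB addrC subrK.
have tau_le := tau_of_le B M_sym.
have g_le : enorm g <= sigma_of g M by rewrite le_max lexx.
have tauM_le : tau_of M <= sigma_of g M by rewrite le_max lexx orbT.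
by rewrite {1}/sigma_of ge_max; apply/andP; split; lra.
Qed.

End EuclideanSpace.

Lemma iteration_count_le (R : realType) (gdec ginc delta Dm F_low : R)
    (D F : nat -> R) (K : nat) :
  0 < gdec -> gdec < 1 -> 1 < ginc -> 0 < delta -> 0 < Dm ->
  (forall k, (k <= K)%N -> Dm <= D k) -> F_low <= F K ->
  (forall k, (k < K)%N ->
     (D k.+1 <= ginc * D k /\ F k.+1 <= F k - delta) \/
     (D k.+1 = gdec * D k /\ F k.+1 = F k)) ->
  K%:R <= ln (D 0%N / Dm) / ln gdec^-1
          + (1 + ln ginc / ln gdec^-1) * ((F 0%N - F_low) / delta).
Proof.
move=> gdec_gt0 gdec_lt1 ginc_gt1 delta_gt0 Dm_gt0 D_ge F_low_le step.
have D_gt0 k : (k <= K)%N -> 0 < D k by move=> /D_ge; apply: lt_le_trans.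
set Lg := ln gdec^-1; set Li := ln ginc.
have Lg_gt0 : 0 < Lg by rewrite ln_gt0 // invf_gt1.
have ln_gdec : ln gdec = - Lg by rewrite /Lg lnV ?opprK ?posrE.
have Li_gt0 : 0 < Li by rewrite ln_gt0.
have LgLi_ge0 : 0 <= Lg + Li by lra.
have potential k : (k <= K)%N ->
    k%:R * (Lg * delta) <= (ln (D 0%N) - ln (D k)) * delta + (Lg + Li) * (F 0%N - F k).
  elim: k => [|k IH] k_lt; first by rewrite !subrr mulr0 addr0 !mul0r.
  have Dk_gt0 := D_gt0 k (ltnW k_lt); have Dk1_gt0 := D_gt0 k.+1 k_lt.
  have {}IH := IH (ltnW k_lt); rewrite -natr1 mulrDl mul1r.
  case: (step k k_lt) => [[D_le F_le] | [-> ->]].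
    have : ln (D k.+1) <= Li + ln (D k).
      have ginc_gt0 := lt_trans ltr01 ginc_gt1.
      by rewrite -lnM ?posrE // ler_ln ?posrE ?mulr_gt0.
    move=> /(ler_wpM2r (ltW delta_gt0)).
    have := ler_wpM2l LgLi_ge0 F_le; lra.
  by rewrite lnM ?posrE // ln_gdec; lra.
have pot_K := potential K (leqnn K).
have : ln Dm <= ln (D K) by rewrite ler_ln ?posrE ?D_ge ?D_gt0.
move=> /(ler_wpM2r (ltW delta_gt0)) ln_Dm_le.
have F_K_le := ler_wpM2l LgLi_ge0 F_low_le.
rewrite -(ler_pM2r (mulr_gt0 Lg_gt0 delta_gt0)).
have -> : (ln (D 0%N / Dm) / Lg + (1 + Li / Lg) * ((F 0%N - F_low) / delta)) * (Lg * delta)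
    = (ln (D 0%N) - ln Dm) * delta + (Lg + Li) * (F 0%N - F_low).
  by rewrite lnM ?posrE ?invr_gt0 ?D_gt0 // lnV ?posrE //; field; rewrite !gt_eqF.
lra.
Qed.

Section TrustRegionIterates.
Variables (R : realType) (n : nat) (f : 'cV[R]_n -> R).
Variables (Dmax gdec ginc etaU etaS mu_c kmf kmg kmh kH ks eps : R).
Variables (x s : nat -> 'cV[R]_n) (Delta : nat -> R).
Variables (c : nat -> R) (g : nat -> 'cV[R]_n) (H : nat -> 'M[R]_n) (K : nat).

Let m k := qmodel (c k) (g k) (H k) (x k).
Let model_decrease k := m k (x k) - m k (x k + s k).
Let rho k := (f (x k) - f (x k + s k)) / model_decrease k.
Let sigma_m k := sigma_of (g k) (H k).
Let ksig := kappa_sigma kmg Dmax kmh.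
Let Dm := Delta_min eps (Delta 0%N) Dmax gdec etaS mu_c kmf kmg kmh ks kH.
Let delta := etaU * ks * Num.min (eps * Dm) (eps * Dm ^+ 2) / (1 + ksig / mu_c).

Hypotheses (D0_gt0 : 0 < Delta 0%N) (D0_le_max : Delta 0%N <= Dmax).
Hypotheses (gdec_gt0 : 0 < gdec) (gdec_lt1 : gdec < 1) (ginc_gt1 : 1 < ginc).
Hypotheses (etaU_gt0 : 0 < etaU) (etaU_le_etaS : etaU <= etaS) (etaS_lt1 : etaS < 1).
Hypotheses (mu_c_gt0 : 0 < mu_c) (kmf_gt0 : 0 < kmf) (kmg_gt0 : 0 < kmg) (kmh_gt0 : 0 < kmh).
Hypotheses (kH_ge1 : 1 <= kH) (ks_gt0 : 0 < ks).
Hypothesis H_sym : forall k, (H k)^T = H k.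
Hypothesis model_fq :
  forall k, fully_quadratic f (c k) (g k) (H k) (x k) (Delta k) kmf kmg kmh.
Hypothesis H_bounded : forall k, opnorm (H k) <= kH - 1.
Hypothesis step_le : forall k, enorm (s k) <= Delta k.
Hypothesis step_decrease : forall k,
  ks * Num.max (enorm (g k) * Num.min (Delta k) (enorm (g k) / (opnorm (H k) + 1)))
               (tau_of (H k) * Delta k ^+ 2) <= model_decrease k.
Hypothesis update : forall k,
  if (etaS <= rho k) && (mu_c * Delta k <= sigma_m k) then
    x k.+1 = x k + s k /\ Delta k.+1 = Num.min (ginc * Delta k) Dmax
  else if (etaU <= rho k) && (rho k < etaS) && (mu_c * Delta k <= sigma_m k) then
    x k.+1 = x k + s k /\ Delta k.+1 = Delta k
  else x k.+1 = x k /\ Delta k.+1 = gdec * Delta k.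
Hypothesis eps_gt0 : 0 < eps.
Hypothesis sigma_ge_eps :
  forall k, (k < K)%N -> eps <= sigma_of (grad f (x k)) (hess f (x k)).

Variant update_spec k : Prop :=
  | VerySuccessful of etaS <= rho k & mu_c * Delta k <= sigma_m k &
      x k.+1 = x k + s k & Delta k.+1 = Num.min (ginc * Delta k) Dmax
  | Successful of etaU <= rho k & rho k < etaS & mu_c * Delta k <= sigma_m k &
      x k.+1 = x k + s k & Delta k.+1 = Delta k
  | Unsuccessful of ~~ ((etaU <= rho k) && (mu_c * Delta k <= sigma_m k)) &
      x k.+1 = x k & Delta k.+1 = gdec * Delta k.

Lemma updateP k : update_spec k.
Proof.
have := update k; case: ifP => [/andP[rho_ge sig_ge] [x_next D_next] | not_vs].
  exact: VerySuccessful.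
case: ifP => [/andP[/andP[rho_ge rho_lt] sig_ge] [x_next D_next] | not_s].
  exact: Successful.
case=> x_next D_next; apply: Unsuccessful => //; apply/negP => /andP[rho_ge sig_ge].
by case: (leP etaS (rho k)) => rho_etaS; [rewrite rho_etaS sig_ge in not_vs
  | rewrite rho_ge rho_etaS sig_ge in not_s].
Qed.

Lemma Delta_bounds k : 0 < Delta k <= Dmax.
Proof.
elim: k => [|k /andP[D_gt0 D_le]]; first by rewrite D0_gt0 D0_le_max.
case: (updateP k) => [_ _ _ -> | _ _ _ _ -> | _ _ ->]; rewrite ?D_gt0 ?D_le //.
  rewrite lt_min ge_min lexx orbT andbT.
  by rewrite mulr_gt0 ?(lt_trans ltr01 ginc_gt1) ?(lt_le_trans D_gt0 D_le).
by rewrite mulr_gt0 //= (le_trans _ D_le) // ger_pMl // ltW.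
Qed.

Lemma Delta_next_ge k : gdec * Delta k <= Delta k.+1.
Proof.
have /andP[D_gt0 D_le] := Delta_bounds k.
have := gdec_lt1; have := ginc_gt1.
case: (updateP k) => [_ _ _ -> | _ _ _ _ -> | _ _ ->]; rewrite ?le_min; nra.
Qed.

Lemma model_errors k :
  [/\ `|m k (x k) - f (x k)| <= kmf * Delta k ^+ 3,
      `|m k (x k + s k) - f (x k + s k)| <= kmf * Delta k ^+ 3,
      enorm (g k - grad f (x k)) <= kmg * Delta k ^+ 2 &
      opnorm (H k - hess f (x k)) <= kmh * Delta k].
Proof.
have /andP[D_gt0 _] := Delta_bounds k.
have center : enorm (x k - x k) <= Delta k by rewrite subrr enorm0 ltW.
have trial : enorm (x k + s k - x k) <= Delta k by rewrite (addrC (x k)) addrK step_le.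
have [center_f [center_g center_H]] := model_fq center.
have [trial_f _] := model_fq trial.
by split=> //; move: center_g; rewrite /qmodel_grad subrr mulmx0 addr0.
Qed.

Lemma ksig_gt0 : 0 < ksig.
Proof. by rewrite (lt_le_trans kmh_gt0) // le_max lexx orbT. Qed.

Lemma sigma_le_model_sigma k :
  sigma_of (grad f (x k)) (hess f (x k)) <= sigma_m k + ksig * Delta k.
Proof.
have /andP[D_gt0 D_le] := Delta_bounds k.
have [_ _ g_err H_err] := model_errors k.
have kmg_le : kmg * Dmax <= ksig by rewrite le_max lexx.
have kmh_le : kmh <= ksig by rewrite le_max lexx orbT.
apply: sigma_of_le (H_sym k) _ _.
  apply: le_trans g_err _; rewrite expr2 mulrA ler_wpM2r ?(ltW D_gt0) //.
  exact: le_trans (ler_wpM2l (ltW kmg_gt0) D_le) kmg_le.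
exact: le_trans H_err (ler_wpM2r (ltW D_gt0) kmh_le).
Qed.

Lemma model_decrease_ge k :
  ks * (sigma_m k * Num.min (Delta k) (Num.min (sigma_m k / kH) (Delta k ^+ 2)))
    <= model_decrease k.
Proof.
apply: le_trans (step_decrease k); apply: ler_wpM2l; first exact: ltW.
have G_ge0 := enorm_ge0 (g k); have T_ge0 := tau_of_ge0 (H k).
rewrite /sigma_m /sigma_of; case: (leP (enorm (g k)) (tau_of (H k))) => _.
  apply: le_trans (_ : tau_of (H k) * Delta k ^+ 2 <= _).
    by rewrite ler_wpM2l // !ge_min lexx !orbT.
  by rewrite le_max lexx orbT.
apply: le_trans (_ : enorm (g k) * Num.min (Delta k) (enorm (g k) / (opnorm (H k) + 1)) <= _).
  have P_ge0 := opnorm_ge0 (H k).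
  have P1_le : opnorm (H k) + 1 <= kH by have := H_bounded k; lra.
  have G_kH : enorm (g k) / kH <= enorm (g k) / (opnorm (H k) + 1).
    by rewrite ler_wpM2l // lef_pV2 ?posrE //; lra.
  by rewrite ler_wpM2l // le_min !ge_min lexx G_kH !orbT.
by rewrite le_max lexx.
Qed.

Lemma model_sigma_ge k a : (k < K)%N ->
  Delta k * (a + ksig) <= eps -> a * Delta k <= sigma_m k.
Proof.
by move=> k_lt D_le; have := sigma_ge_eps k_lt; have := sigma_le_model_sigma k; lra.
Qed.

Lemma ratio_ge_etaS k :
  2 * kmf * Delta k ^+ 3 <= (1 - etaS) * model_decrease k -> etaS <= rho k.
Proof.
move=> dec_ge; have /andP[D_gt0 _] := Delta_bounds k.
have dec_gt0 : 0 < model_decrease k.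
  have : 0 < (1 - etaS) * model_decrease k.
    by apply: lt_le_trans dec_ge; rewrite !mulr_gt0 ?exprn_gt0.
  by rewrite pmulr_rgt0 // subr_gt0.
rewrite /rho ler_pdivlMr //.
have [f_center f_trial _ _] := model_errors k.
move: f_center f_trial; rewrite !ler_norml => /andP[center_lo center_hi] /andP[trial_lo trial_hi].
by move: dec_ge; rewrite /model_decrease; lra.
Qed.

Lemma Delta_min_gt0 : 0 < Dm.
Proof.
have q_gt0 : 0 < (1 + ksig / mu_c) * kH.
  by rewrite mulr_gt0 ?addr_gt0 ?divr_gt0 ?ksig_gt0 ?(lt_le_trans ltr01 kH_ge1).
have pos a : mu_c <= a -> 0 < gdec * eps / (a + ksig).
  by move=> mu_le; rewrite !divr_gt0 ?mulr_gt0 ?addr_gt0 ?ksig_gt0 // (lt_le_trans mu_c_gt0).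
rewrite /Dm /Delta_min /= -/ksig !lt_min D0_gt0 (divr_gt0 eps_gt0 q_gt0).
by rewrite !pos // le_max lexx orbT.
Qed.

Lemma model_sigma_ge_if_small k : (k < K)%N -> gdec * Delta k <= Dm ->
  [/\ 2 * kmf * Dmax * Delta k <= ks * (1 - etaS) * sigma_m k,
      2 * kmf * Delta k <= ks * (1 - etaS) * sigma_m k,
      kH * Delta k <= sigma_m k & mu_c * Delta k <= sigma_m k].
Proof.
move=> k_lt small; have /andP[D_gt0 _] := Delta_bounds k.
have sigma_ge a : mu_c <= a -> Dm <= gdec * eps / (a + ksig) -> a * Delta k <= sigma_m k.
  move=> mu_le Dm_le; have a_pos : 0 < a + ksig.
    by rewrite addr_gt0 ?ksig_gt0 ?(lt_le_trans mu_c_gt0).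
  apply: model_sigma_ge k_lt _.
  by rewrite -(ler_pM2l gdec_gt0) mulrA -ler_pdivlMr // (le_trans small).
have kse_gt0 : 0 < ks * (1 - etaS) by rewrite mulr_gt0 // subr_gt0.
have sig1 : Num.max (Num.max (2 * kmf * Dmax / (ks * (1 - etaS))) kH) mu_c * Delta k
    <= sigma_m k.
  apply: sigma_ge; first by rewrite le_max lexx orbT.
  by rewrite /Dm /Delta_min /= -/ksig !ge_min lexx !orbT.
have sig2 : Num.max (2 * kmf / (ks * (1 - etaS))) mu_c * Delta k <= sigma_m k.
  apply: sigma_ge; first by rewrite le_max lexx orbT.
  by rewrite /Dm /Delta_min /= -/ksig !ge_min lexx !orbT.
split.
- rewrite -ler_pdivrMl // mulrA [_^-1 * _]mulrC; apply: le_trans sig1.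
  by rewrite ler_wpM2r ?(ltW D_gt0) // !le_max lexx.
- rewrite -ler_pdivrMl // mulrA [_^-1 * _]mulrC; apply: le_trans sig2.
  by rewrite ler_wpM2r ?(ltW D_gt0) // le_max lexx.
- by apply: le_trans sig1; rewrite ler_wpM2r ?(ltW D_gt0) // !le_max lexx orbT.
- by apply: le_trans sig1; rewrite ler_wpM2r ?(ltW D_gt0) // le_max lexx orbT.
Qed.

Lemma very_successful_if_small k : (k < K)%N -> gdec * Delta k <= Dm ->
  etaS <= rho k /\ mu_c * Delta k <= sigma_m k.
Proof.
move=> k_lt small; have /andP[D_gt0 D_le] := Delta_bounds k.
have [g1 g2 kH_le mu_le] := model_sigma_ge_if_small k_lt small.
split=> //; apply: ratio_ge_etaS.
have D_le_sig : Delta k <= sigma_m k / kH.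
  by rewrite ler_pdivlMr ?(lt_le_trans ltr01 kH_ge1) // mulrC.
have min_ge : Num.min (Delta k) (Delta k ^+ 2)
    <= Num.min (Delta k) (Num.min (sigma_m k / kH) (Delta k ^+ 2)).
  by rewrite !le_min !ge_min !lexx D_le_sig !orbT.
have sig_ge0 : 0 <= sigma_m k by rewrite le_max enorm_ge0.
apply: le_trans (ler_wpM2l _ (model_decrease_ge k)); last by rewrite subr_ge0 ltW.
apply: le_trans (_ : ks * (1 - etaS) * (sigma_m k * Num.min (Delta k) (Delta k ^+ 2)) <= _).
  have kmf_D2 : 0 <= 2 * kmf * Delta k ^+ 2 by rewrite !mulr_ge0 ?sqr_ge0 ?ltW.
  case: (leP (Delta k) (Delta k ^+ 2)) => _.
    have := ler_wpM2r (ltW D_gt0) g1; have := ler_wpM2l kmf_D2 D_le; lra.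
  by have := ler_wpM2r (sqr_ge0 (Delta k)) g2; lra.
rewrite (mulrC ks) -mulrA ler_wpM2l ?subr_ge0 ?(ltW etaS_lt1) //.
by rewrite ler_wpM2l ?(ltW ks_gt0) // ler_wpM2l.
Qed.

Lemma Delta_ge_Delta_min k : (k <= K)%N -> Dm <= Delta k.
Proof.
elim: k => [|k IH] k_le; first by rewrite /Dm /Delta_min /= !ge_min lexx.
have {}IH := IH (ltnW k_le); have /andP[D_gt0 D_le] := Delta_bounds k.
have [small | large] := leP (gdec * Delta k) Dm; last first.
  exact: ltW (lt_le_trans large (Delta_next_ge k)).
have [rho_ge sig_ge] := very_successful_if_small k_le small.
case: (updateP k) => [_ _ _ -> | _ rho_lt _ _ _ | not_succ _ _].
- rewrite le_min (le_trans IH D_le) andbT.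
  by have := ginc_gt1; have := Delta_min_gt0; nra.
- by move: rho_ge; rewrite (lt_geF rho_lt).
- by move: not_succ; rewrite (le_trans etaU_le_etaS rho_ge) sig_ge.
Qed.

Lemma delta_gt0 : 0 < delta.
Proof.
have Dm_gt0 := Delta_min_gt0.
have q_gt0 : 0 < 1 + ksig / mu_c by rewrite addr_gt0 ?divr_gt0 ?ksig_gt0.
by rewrite divr_gt0 // !mulr_gt0 // lt_min !mulr_gt0 ?exprn_gt0.
Qed.

Lemma model_sigma_ge_eps k : (k < K)%N -> mu_c * Delta k <= sigma_m k ->
  eps / (1 + ksig / mu_c) <= sigma_m k.
Proof.
move=> k_lt sig_ge; have q_gt0 : 0 < 1 + ksig / mu_c.
  by rewrite addr_gt0 ?divr_gt0 ?ksig_gt0.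
have : ksig * Delta k <= ksig / mu_c * sigma_m k.
  by rewrite -mulrA ler_wpM2l ?(ltW ksig_gt0) // mulrC ler_pdivlMr // mulrC.
have := sigma_le_model_sigma k; have := sigma_ge_eps k_lt.
by rewrite ler_pdivrMr //; lra.
Qed.

Lemma successful_decrease k : (k < K)%N -> Dm <= Delta k -> etaU <= rho k ->
  mu_c * Delta k <= sigma_m k -> delta <= f (x k) - f (x k + s k).
Proof.
move=> k_lt Dm_le rho_ge sig_ge; have Dm_gt0 := Delta_min_gt0.
have q_gt0 : 0 < 1 + ksig / mu_c by rewrite addr_gt0 ?divr_gt0 ?ksig_gt0.
have kH_gt0 := lt_le_trans ltr01 kH_ge1.
have sig_eps := model_sigma_ge_eps k_lt sig_ge.
have Dm_le_sig : Dm <= sigma_m k / kH.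
  rewrite ler_pdivlMr //; apply: le_trans sig_eps.
  rewrite ler_pdivlMr // -mulrA [kH * _]mulrC -ler_pdivlMr ?mulr_gt0 //.
  by rewrite /Dm /Delta_min /= -/ksig !ge_min lexx !orbT.
have min_ge : Num.min Dm (Dm ^+ 2)
    <= Num.min (Delta k) (Num.min (sigma_m k / kH) (Delta k ^+ 2)).
  have Dm2_le : Dm ^+ 2 <= Delta k ^+ 2 by nra.
  (* [Dm] unfolds to a [Num.min], so [ge_min] needs explicit arguments here. *)
  have [mn_le_Dm mn_le_Dm2] : Num.min Dm (Dm ^+ 2) <= Dm /\ Num.min Dm (Dm ^+ 2) <= Dm ^+ 2.
    by rewrite !(ge_min _ Dm (Dm ^+ 2)) !lexx orbT.
  rewrite !le_min (le_trans mn_le_Dm Dm_le) (le_trans mn_le_Dm Dm_le_sig).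
  by rewrite (le_trans mn_le_Dm2 Dm2_le).
have mn_gt0 : 0 < Num.min Dm (Dm ^+ 2) by rewrite lt_min Dm_gt0 exprn_gt0.
have dec_ge : etaU * ks * (eps / (1 + ksig / mu_c) * Num.min Dm (Dm ^+ 2))
    <= etaU * model_decrease k.
  rewrite -mulrA ler_wpM2l ?(ltW etaU_gt0) //; apply: le_trans (model_decrease_ge k).
  rewrite ler_wpM2l ?(ltW ks_gt0) //; apply: ler_pM => //; last exact: ltW.
  by rewrite divr_ge0 ?ltW.
have dec_gt0 : 0 < model_decrease k.
  apply: lt_le_trans (model_decrease_ge k); rewrite !mulr_gt0 //.
  - exact: lt_le_trans (divr_gt0 eps_gt0 q_gt0) sig_eps.
  - exact: lt_le_trans mn_gt0 min_ge.
have delta_eq : delta = etaU * ks * (eps / (1 + ksig / mu_c) * Num.min Dm (Dm ^+ 2)).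
  by rewrite /delta -minr_pMr ?(ltW eps_gt0) //; ring.
by rewrite delta_eq (le_trans dec_ge) // -ler_pdivlMr.
Qed.

Lemma trust_region_progress :
  [/\ 0 < Dm, 0 < delta, forall k, (k <= K)%N -> Dm <= Delta k &
    forall k, (k < K)%N ->
      (Delta k.+1 <= ginc * Delta k /\ f (x k.+1) <= f (x k) - delta) \/
      (Delta k.+1 = gdec * Delta k /\ f (x k.+1) = f (x k))].
Proof.
split; [exact: Delta_min_gt0 | exact: delta_gt0 | exact: Delta_ge_Delta_min |].
move=> k k_lt; have Dm_le := Delta_ge_Delta_min (ltnW k_lt).
have /andP[D_gt0 _] := Delta_bounds k.
case: (updateP k) => [rho_ge sig_ge -> -> | rho_ge _ sig_ge -> -> | _ -> ->]; last by right.
  have := successful_decrease k_lt Dm_le (le_trans etaU_le_etaS rho_ge) sig_ge.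
  by left; split; [rewrite ge_min lexx | lra].
have := successful_decrease k_lt Dm_le rho_ge sig_ge; have := ginc_gt1.
by left; split; nra.
Qed.

End TrustRegionIterates.

Theorem theorem4p15 (R : realType) (n : nat)
  (f : 'cV[R]_n -> R) (f_low L : R)
  (Dmax gdec ginc etaU etaS mu_c : R)
  (kmf kmg kmh kH ks eps : R)
  (x s : nat -> 'cV[R]_n) (Delta : nat -> R)
  (c : nat -> R) (g : nat -> 'cV[R]_n) (H : nat -> 'M[R]_n)
  (K : nat) :
  (* f bounded below, C^2 with Lipschitz Hessian *)
  (forall y, f_low <= f y) ->
  C2 f -> hess_lipschitz f L ->
  (* algorithm parameters *)
  0 < Delta 0%N -> Delta 0%N <= Dmax ->
  0 < gdec -> gdec < 1 -> 1 < ginc ->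
  0 < etaU -> etaU <= etaS -> etaS < 1 -> 0 < mu_c ->
  (* model constants *)
  0 < kmf -> 0 < kmg -> 0 < kmh -> 1 <= kH ->
  0 < ks -> ks < 2^-1 ->
  (* the models: symmetric, fully quadratic, bounded Hessian *)
  (forall k, (H k)^T = H k) ->
  (forall k, fully_quadratic f (c k) (g k) (H k) (x k) (Delta k) kmf kmg kmh) ->
  (forall k, opnorm (H k) <= kH - 1) ->
  (* the steps *)
  (forall k, enorm (s k) <= Delta k) ->
  (forall k, qmodel (c k) (g k) (H k) (x k) (x k)
               - qmodel (c k) (g k) (H k) (x k) (x k + s k)
             >= ks * Num.max (enorm (g k) * Num.min (Delta k) (enorm (g k) / (opnorm (H k) + 1)))
                             (tau_of (H k) * Delta k ^+ 2)) ->
  (* the iteration *)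
  (forall k,
     let rho := (f (x k) - f (x k + s k)) /
                (qmodel (c k) (g k) (H k) (x k) (x k)
                 - qmodel (c k) (g k) (H k) (x k) (x k + s k)) in
     let sm := sigma_of (g k) (H k) in
     if (etaS <= rho) && (mu_c * Delta k <= sm) then
       x k.+1 = x k + s k /\ Delta k.+1 = Num.min (ginc * Delta k) Dmax
     else if (etaU <= rho) && (rho < etaS) && (mu_c * Delta k <= sm) then
       x k.+1 = x k + s k /\ Delta k.+1 = Delta k
     else
       x k.+1 = x k /\ Delta k.+1 = gdec * Delta k) ->
  (* conclusion *)
  0 < eps ->
  (forall k, (k < K)%N -> eps <= sigma_of (grad f (x k)) (hess f (x k))) ->
  let ksig := kappa_sigma kmg Dmax kmh in
  let Dm := Delta_min eps (Delta 0%N) Dmax gdec etaS mu_c kmf kmg kmh ks kH in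
  K%:R <= ln (Delta 0%N / Dm) / ln (gdec^-1)
          + (1 + ln ginc / ln (gdec^-1))
            * ((1 + ksig * mu_c^-1) * (f (x 0%N) - f_low)
               / (etaU * ks * Num.min (eps * Dm) (eps * Dm ^+ 2))).
Proof.
(* Smoothness of f only serves to make fully quadratic models available. *)
move=> f_ge _ _ D0_gt0 D0_le gdec_gt0 gdec_lt1 ginc_gt1 etaU_gt0 etaU_le etaS_lt1 mu_c_gt0
  kmf_gt0 kmg_gt0 kmh_gt0 kH_ge1 ks_gt0 _ H_sym model_fq H_bounded step_le step_decrease
  update eps_gt0 sigma_ge /=.
have [Dm_gt0 delta_gt0 Dm_le progress] := trust_region_progress D0_gt0 D0_le gdec_gt0
  gdec_lt1 ginc_gt1 etaU_gt0 etaU_le etaS_lt1 mu_c_gt0 kmf_gt0 kmg_gt0 kmh_gt0 kH_ge1 ks_gt0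
  H_sym model_fq H_bounded step_le step_decrease update eps_gt0 sigma_ge.
set Dm := Delta_min _ _ _ _ _ _ _ _ _ _ _ in Dm_gt0 Dm_le progress *.
set delta := etaU * ks * _ / _ in delta_gt0 progress.
rewrite (_ : (1 + _) * _ / _ = (f (x 0%N) - f_low) / delta).
  exact: (iteration_count_le gdec_gt0 gdec_lt1 ginc_gt1 delta_gt0 Dm_gt0 Dm_le (f_ge _) progress).
by rewrite /delta invf_div [RHS]mulrCA [RHS]mulrA.
Qed.
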